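(* For every positive integer $n$, $C_S(y^n x^n) = K[y^n x^n]$.
   Context: Standing conventions: $K$ is a field, $R = K[y]$, $\sigma$ is a $K$-algebra endomorphism of $R$ with $\deg_y(\sigma(y)) > 1$, and $\delta$ is a $K$-linear $\sigma$-derivation of $R$ ($\delta(ab) = \sigma(a)\delta(b) + \delta(a)b$). $S = R[x;\sigma,\delta]$ is the Ore extension (polynomials $\sum r_i x^i$, $r_i\in R$, with $xr = \sigma(r)x + \delta(r)$). $C_S(P)$ is the centralizer of $P$ in $S$, and $K[P] = \{\sum_i c_i P^i : c_i \in K\}$. *)

From HB Require Import structures.
From mathcomp Require Import all_boot all_order all_algebra.
Set Implicit Arguments. Unset Strict Implicit. Unset Printing Implicit Defensive.
Import GRing.Theory.
Local Open Scope ring_scope.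

(* R = K[y] is {poly K} (variable y = 'X).  Elements of the Ore extension
   S = R[x; sigma, delta] are represented by their (unique) left normal form
   sum_i r_i x^i, i.e. as elements of {poly {poly K}} (outer variable = x).
   The ring structure of {poly {poly K}} is NOT used for the Ore product,
   except for left multiplication by an element r%:P of R, which agrees with
   the Ore product r * (sum r_i x^i) = sum (r r_i) x^i. *)

Definition is_Kalg_endo (K : fieldType) (sigma : {poly K} -> {poly K}) : Prop :=
  [/\ forall a b, sigma (a + b) = sigma a + sigma b,
      forall a b, sigma (a * b) = sigma a * sigma b,
      sigma 1 = 1 &
      forall (c : K) a, sigma (c *: a) = c *: sigma a].

Definition is_Klin_sigma_deriv (K : fieldType) (sigma delta : {poly K} -> {poly K})
  : Prop :=
  [/\ forall a b, delta (a + b) = delta a + delta b,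
      forall (c : K) a, delta (c *: a) = c *: delta a &
      forall a b, delta (a * b) = sigma a * delta b + delta a * b].

(* left multiplication by x:  x * (r x^j) = sigma(r) x^(j+1) + delta(r) x^j *)
Definition ore_mulx (K : fieldType) (sigma delta : {poly K} -> {poly K})
  (g : {poly {poly K}}) : {poly {poly K}} :=
  \sum_(j < size g) ((sigma g`_j)%:P * 'X^(j.+1) + (delta g`_j)%:P * 'X^j).

Definition ore_mul (K : fieldType) (sigma delta : {poly K} -> {poly K})
  (f g : {poly {poly K}}) : {poly {poly K}} :=
  \sum_(i < size f) (f`_i)%:P * iter i (ore_mulx sigma delta) g.

Definition ore_pow (K : fieldType) (sigma delta : {poly K} -> {poly K})
  (P : {poly {poly K}}) (i : nat) : {poly {poly K}} :=
  iter i (ore_mul sigma delta P) 1.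

Definition centralizer (K : fieldType) (sigma delta : {poly K} -> {poly K})
  (P : {poly {poly K}}) : {poly {poly K}} -> Prop :=
  fun f => ore_mul sigma delta f P = ore_mul sigma delta P f.

Definition Kpoly_in (K : fieldType) (sigma delta : {poly K} -> {poly K})
  (P : {poly {poly K}}) : {poly {poly K}} -> Prop :=
  fun f => exists c : seq K,
    f = \sum_(i < size c) ore_mul sigma delta ((c`_i)%:P%:P) (ore_pow sigma delta P i).

(* The Ore product satisfies a degree formula: for nonzero f, g,
     deg_x (f g) = deg_x f + deg_x g,   lc (f g) = lc f * sigma^(deg_x f) (lc g),
   and deg_y sigma(r) = d * deg_y r.  If f <> 0 commutes with P, comparing the
   y-degrees of the leading coefficients of f P and P f gives, for
   m = deg_x f and k = deg_y (lc f), the "degree equation"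
     k + n d^m = n + k d^n.                                               (E)
   Arithmetic shows that (E) forces n | m, and that m determines k.  Hence
   deg_x f = deg_x P^q for some q, and lc f, lc P^q have the same y-degree, so
   subtracting a suitable c P^q (c in K) kills the top y-coefficient of lc f.
   The difference still commutes with P, so by (E) it cannot keep the
   x-degree of f while lowering the y-degree of its leading coefficient: its
   x-degree drops, and induction on deg_x f gives C_S(P) <= K[P].  The
   inclusion K[P] <= C_S(P) follows from associativity of the Ore product. *)

From HB Require Import structures.
From mathcomp Require Import all_boot all_order all_algebra.
From mathcomp Require Import zify.
Set Implicit Arguments. Unset Strict Implicit. Unset Printing Implicit Defensive.
Import GRing.Theory.

Lemma double_le_exp2 x : 2 * x <= 2 ^ x.
Proof. by case: x => // x; rewrite expnS leq_pmul2l // ltn_expl. Qed.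

(* The exponents a with  n d^a = n (mod M); for M = d^n - 1 equation (E)
   implies that m is such an exponent. *)
Definition fixes_mod (M n d a : nat) : Prop := n * d ^ a = n %[mod M].

Section FixedExponents.
Variables M n d : nat.

Lemma fixes_mod_sub a b :
  a <= b -> fixes_mod M n d a -> fixes_mod M n d b -> fixes_mod M n d (b - a).
Proof.
move=> le_ab Fa Fb; rewrite /fixes_mod -Fb -{2}(subnKC le_ab) expnD mulnA.
by rewrite -(modnMml (n * d ^ a)) Fa modnMml.
Qed.

Lemma fixes_mod_gcd a b :
  fixes_mod M n d a -> fixes_mod M n d b -> fixes_mod M n d (gcdn a b).
Proof.
have [s] := ubnP (a + b); elim: s a b => // s IH a b lt_ab.
wlog le_ab : a b lt_ab / a <= b => [hwlog|].
  by case: (leqP a b) => [|/ltnW] h Fa Fb; [|rewrite gcdnC]; apply: hwlog; rewrite // addnC.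
case: a le_ab lt_ab => [|a] le_ab lt_ab Fa Fb; first by rewrite gcd0n.
have Fd := fixes_mod_sub le_ab Fa Fb.
rewrite -(subnKC le_ab) gcdnDl; apply: IH Fa Fd; lia.
Qed.

End FixedExponents.

Lemma exp_period d n q : 0 < d -> (d ^ n) ^ q = 1 %[mod d ^ n - 1].
Proof.
move=> d_gt0; have dn : d ^ n = d ^ n - 1 + 1 by rewrite subnK // expn_gt0 d_gt0.
by rewrite -modnXm {1}dn modnDl modnXm exp1n.
Qed.

Lemma fixes_mod_periodic d n a q : 0 < d ->
  fixes_mod (d ^ n - 1) n d (q * n + a) <-> fixes_mod (d ^ n - 1) n d a.
Proof.
move=> d_gt0; rewrite /fixes_mod (mulnC q) expnD expnM mulnCA mulnC.
by rewrite -modnMmr exp_period // modnMmr muln1.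
Qed.

(* No proper divisor g of n fixes n modulo d^n - 1: n d^g - n would be a
   positive multiple of d^n - 1, yet it is smaller than d^n - 1. *)
Lemma no_proper_fixed_divisor d n g : 1 < d -> 0 < g -> g %| n -> g < n ->
  ~ fixes_mod (d ^ n - 1) n d g.
Proof.
move=> d_gt1 g_gt0 g_dvd_n lt_gn Fg.
have le_2g_n : 2 * g <= n.
  move: g_dvd_n lt_gn => /dvdnP [t ->]; rewrite -{1}(mul1n g) ltn_mul2r g_gt0 /=.
  by move=> t_gt1; rewrite leq_mul2r t_gt1 orbT.
have dg_ge2 : 2 <= d ^ g.
  by rewrite (leq_trans d_gt1) // -{1}(expn1 d) leq_pexp2l // ltnW.
have dvd_N : d ^ n - 1 %| n * d ^ g - n.
  by rewrite -eqn_mod_dvd ?leq_pmulr ?expn_gt0 ?(ltnW d_gt1) //; apply/eqP.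
have le_N : d ^ n - 1 <= n * d ^ g - n.
  by apply: dvdn_leq dvd_N; rewrite subn_gt0 -{1}(muln1 n) ltn_mul2l; lia.
have ge_dn : d ^ g * n <= d ^ n.
  have n_le : n <= d ^ (n - g).
    have le_2pow : 2 ^ (n - g) <= d ^ (n - g) by rewrite leq_exp2r //; lia.
    by apply: leq_trans le_2pow; apply: leq_trans (double_le_exp2 _); lia.
  by rewrite -{2}(subnKC (ltnW lt_gn)) expnD leq_mul2l n_le orbT.
have : 2 * n <= d ^ g * n by rewrite leq_mul2r dg_ge2 orbT.
rewrite mulnC in le_N; lia.
Qed.

(* The degree equation (E) forces n | m:  m mod n and n are fixed exponents,
   so is their gcd, which must then be n itself. *)
Lemma degree_equation_dvd d n m k : 1 < d -> 0 < n ->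
  k + n * d ^ m = n + k * d ^ n -> n %| m.
Proof.
move=> d_gt1 n_gt0 E.
have d_gt0 : 0 < d by lia.
have Fm : fixes_mod (d ^ n - 1) n d m.
  rewrite /fixes_mod (_ : n * d ^ m = k * (d ^ n - 1) + n) ?modnMDl //.
  by rewrite mulnBr muln1; have := @leq_pmulr k (d ^ n); rewrite expn_gt0 d_gt0; lia.
have Fn : fixes_mod (d ^ n - 1) n d n.
  have [_] := @fixes_mod_periodic d n 0 1 d_gt0; rewrite mul1n addn0; apply.
  by rewrite /fixes_mod muln1.
have Fr : fixes_mod (d ^ n - 1) n d (m %% n).
  by apply/(@fixes_mod_periodic _ _ _ (m %/ n) d_gt0); rewrite -divn_eq.
have [r0 | r_gt0] := posnP (m %% n); first by rewrite /dvdn r0.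
have lt_rn : m %% n < n by rewrite ltn_pmod.
case: (@no_proper_fixed_divisor d n (gcdn (m %% n) n)) => //.
- by rewrite gcdn_gt0 r_gt0.
- exact: dvdn_gcdr.
- by apply: leq_ltn_trans lt_rn; apply: dvdn_leq r_gt0 (dvdn_gcdl _ _).
- exact: fixes_mod_gcd.
Qed.

Lemma degree_equation_unique n A D k1 k2 : 1 < D ->
  k1 + A = n + k1 * D -> k2 + A = n + k2 * D -> k1 = k2.
Proof.
move=> D_gt1; have sol k : k + A = n + k * D -> k * (D - 1) = A - n.
  by rewrite mulnBr muln1; have := leq_pmulr k (ltnW D_gt1); lia.
move=> /sol e1 /sol e2; apply/eqP.
by rewrite -(@eqn_pmul2r (D - 1)) ?subn_gt0 // e1 e2.
Qed.

Local Open Scope ring_scope.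

Lemma size_sub_lead (R : fieldType) (p q : {poly R}) :
  size p = size q -> q != 0 ->
  (size (p - (lead_coef p / lead_coef q) *: q)%R < size q)%N.
Proof.
move=> eq_pq q_neq0; set h := p - _ *: q.
have le_h : (size h <= size q)%N.
  by rewrite (leq_trans (size_polyD _ _)) // size_polyN geq_max eq_pq leqnn size_scale_leq.
rewrite ltn_neqAle le_h andbT; apply/eqP => eq_hq.
have : lead_coef h = 0.
  rewrite /lead_coef eq_hq coefD coefN coefZ -eq_pq -/(lead_coef p) eq_pq -/(lead_coef q).
  by rewrite divfK ?subrr // lead_coef_eq0.
move/eqP; rewrite lead_coef_eq0 -size_poly_eq0 eq_hq size_poly_eq0.
by rewrite (negPf q_neq0).
Qed.

Lemma deg_mul (R : idomainType) (p q : {poly R}) : p != 0 -> q != 0 ->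
  (size (p * q)).-1 = ((size p).-1 + (size q).-1)%N.
Proof. by rewrite -!size_poly_gt0 => p_gt0 q_gt0; rewrite size_mul -?size_poly_gt0 //; lia. Qed.

Lemma cancel_lead (R : fieldType) (f g : {poly {poly R}}) :
  size f = size g -> size (lead_coef f) = size (lead_coef g) -> g != 0 ->
  let h := f - (lead_coef (lead_coef f) / lead_coef (lead_coef g))%:P%:P * g in
  (size h <= size f)%N /\ (size h = size f -> size (lead_coef h) < size (lead_coef f))%N.
Proof.
move=> eq_fg eq_lead g_neq0 h; split.
  by rewrite (leq_trans (size_polyD _ _)) // size_polyN geq_max leqnn mul_polyC eq_fg size_scale_leq.
move=> eq_hf; rewrite eq_lead {1}/lead_coef eq_hf coefD coefN coefCM -/(lead_coef f) eq_fg.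
by rewrite -/(lead_coef g) mul_polyC size_sub_lead // lead_coef_eq0.
Qed.

Section OreExtension.
Variable K : fieldType.
Variables sigma delta : {poly K} -> {poly K}.
Hypothesis Hsigma : is_Kalg_endo sigma.
Hypothesis Hdelta : is_Klin_sigma_deriv sigma delta.
Implicit Types (a b r : {poly K}) (f g h u : {poly {poly K}}).

Lemma sigmaD a b : sigma (a + b) = sigma a + sigma b. Proof. by case: Hsigma. Qed.
Lemma sigmaM a b : sigma (a * b) = sigma a * sigma b. Proof. by case: Hsigma. Qed.
Lemma sigma1 : sigma 1 = 1. Proof. by case: Hsigma. Qed.
Lemma sigmaZ c a : sigma (c *: a) = c *: sigma a. Proof. by case: Hsigma. Qed.
Lemma deltaD a b : delta (a + b) = delta a + delta b. Proof. by case: Hdelta. Qed.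
Lemma deltaZ c a : delta (c *: a) = c *: delta a. Proof. by case: Hdelta. Qed.
Lemma deltaM a b : delta (a * b) = sigma a * delta b + delta a * b.
Proof. by case: Hdelta. Qed.

Lemma sigma0 : sigma 0 = 0.
Proof. by apply: (addrI (sigma 0)); rewrite -sigmaD !addr0. Qed.
Lemma delta0 : delta 0 = 0.
Proof. by apply: (addrI (delta 0)); rewrite -deltaD !addr0. Qed.
Lemma delta1 : delta 1 = 0.
Proof.
have := deltaM 1 1; rewrite !mulr1 sigma1 mul1r => E.
by apply: (addrI (delta 1)); rewrite -E addr0.
Qed.

Lemma sigmaC c : sigma c%:P = c%:P.
Proof. by rewrite -[c%:P]mulr1 mul_polyC sigmaZ sigma1. Qed.
Lemma deltaC c : delta c%:P = 0.
Proof. by rewrite -[c%:P]mulr1 mul_polyC deltaZ delta1 scaler0. Qed.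

Local Notation xmul := (ore_mulx sigma delta).
Local Notation omul := (ore_mul sigma delta).

Lemma ore_mulxE g : xmul g = map_poly sigma g * 'X + map_poly delta g.
Proof.
rewrite /ore_mulx big_split /= /map_poly !poly_def mulr_suml.
congr (_ + _); apply: eq_bigr => j _; rewrite ?mul_polyC //.
by rewrite -!mul_polyC -mulrA -exprSr.
Qed.

Lemma coef_ore_mulx g k :
  (xmul g)`_k = (if k is k'.+1 then sigma g`_k' else 0) + delta g`_k.
Proof. by rewrite ore_mulxE coefD coefMX !coef_map_id0 ?sigma0 ?delta0 //; case: k. Qed.

Lemma ore_mulxD g h : xmul (g + h) = xmul g + xmul h.
Proof.
apply/polyP => k; rewrite coefD !coef_ore_mulx !coefD deltaD.
by case: k => [|k]; rewrite ?add0r // coefD sigmaD addrACA.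
Qed.

Lemma ore_mulx0 : xmul 0 = 0.
Proof. by apply/polyP => -[|k]; rewrite coef_ore_mulx !coef0 ?sigma0 delta0 addr0. Qed.

Lemma ore_mulx_sum I (r : seq I) (F : I -> {poly {poly K}}) :
  xmul (\sum_(i <- r) F i) = \sum_(i <- r) xmul (F i).
Proof. exact: (big_morph xmul ore_mulxD ore_mulx0). Qed.

Lemma iter_mulxD i g h : iter i xmul (g + h) = iter i xmul g + iter i xmul h.
Proof. by elim: i => //= i ->; rewrite ore_mulxD. Qed.

Lemma iter_mulx0 i : iter i xmul 0 = 0.
Proof. by elim: i => //= i ->; rewrite ore_mulx0. Qed.

Lemma ore_mulx_polyC r u : xmul (r%:P * u) = (sigma r)%:P * xmul u + (delta r)%:P * u.
Proof.
apply/polyP => k; rewrite coefD !coefCM !coef_ore_mulx.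
case: k => [|k]; rewrite !coefCM deltaM ?mulr0 ?add0r ?mulrDr //.
by rewrite sigmaM !addrA.
Qed.

Lemma iter_mulx_const i (c : K) u : iter i xmul (c%:P%:P * u) = c%:P%:P * iter i xmul u.
Proof.
elim: i => //= i ->.
by rewrite ore_mulx_polyC sigmaC deltaC polyC0 mul0r addr0.
Qed.

Lemma iter_mulx1 i : iter i xmul 1 = 'X^i.
Proof.
elim: i => //= i ->; apply/polyP => k.
rewrite coef_ore_mulx !coefXn.
have sigma_nat (b : bool) : sigma b%:R = b%:R by case: b; rewrite ?sigma1 ?sigma0.
have delta_nat (b : bool) : delta b%:R = 0 by case: b; rewrite ?delta1 ?delta0.
by rewrite delta_nat addr0; case: k => [|k] //; rewrite coefXn sigma_nat.
Qed.

Lemma ore_mul_widen f g N : (size f <= N)%N ->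
  omul f g = \sum_(i < N) (f`_i)%:P * iter i xmul g.
Proof.
move=> le_fN; rewrite /ore_mul (big_ord_widen N (fun i => (f`_i)%:P * iter i xmul g) le_fN).
rewrite big_mkcond; apply: eq_bigr => i _; case: ltnP => // le_fi.
by rewrite nth_default // mul0r.
Qed.

Lemma ore_mulDl f1 f2 g : omul (f1 + f2) g = omul f1 g + omul f2 g.
Proof.
set N := maxn (size f1) (size f2).
have le_sum : (size (f1 + f2)%R <= N)%N by rewrite (leq_trans (size_polyD _ _)).
rewrite (ore_mul_widen g (leq_maxl (size f1) (size f2))).
rewrite (ore_mul_widen g (leq_maxr (size f1) (size f2))) (ore_mul_widen g le_sum) -big_split.
by apply: eq_bigr => i _; rewrite coefD polyCD mulrDl.
Qed.

Lemma ore_mul0l g : omul 0 g = 0.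
Proof. by rewrite /ore_mul size_poly0 big_ord0. Qed.

Lemma ore_mul_suml I (r : seq I) (F : I -> {poly {poly K}}) g :
  omul (\sum_(i <- r) F i) g = \sum_(i <- r) omul (F i) g.
Proof.
exact: (big_morph (fun f => omul f g) (fun f1 f2 => ore_mulDl f1 f2 g) (ore_mul0l g)).
Qed.

Lemma ore_mulDr f g1 g2 : omul f (g1 + g2) = omul f g1 + omul f g2.
Proof. by rewrite /ore_mul -big_split; apply: eq_bigr => i _; rewrite iter_mulxD mulrDr. Qed.

Lemma ore_mul0r f : omul f 0 = 0.
Proof. by rewrite /ore_mul big1 // => i _; rewrite iter_mulx0 mulr0. Qed.

Lemma ore_mul_sumr I (r : seq I) (F : I -> {poly {poly K}}) f :
  omul f (\sum_(i <- r) F i) = \sum_(i <- r) omul f (F i).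
Proof. exact: (big_morph (omul f) (ore_mulDr f) (ore_mul0r f)). Qed.

Lemma ore_mul_polyCl r f g : omul (r%:P * f) g = r%:P * omul f g.
Proof.
rewrite (ore_mul_widen g (_ : size (r%:P * f)%R <= size f)%N); last first.
  by rewrite mul_polyC size_scale_leq.
by rewrite /ore_mul mulr_sumr; apply: eq_bigr => i _; rewrite coefCM polyCM mulrA.
Qed.

Lemma ore_mul_constr (c : K) f g : omul f (c%:P%:P * g) = c%:P%:P * omul f g.
Proof. by rewrite /ore_mul mulr_sumr; apply: eq_bigr => i _; rewrite iter_mulx_const mulrCA. Qed.

Lemma ore_mul_constl (c : K) f : omul c%:P%:P f = c%:P%:P * f.
Proof.
rewrite /ore_mul size_polyC; case: eqP => [->|_]; last by rewrite big_ord1 coefC.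
by rewrite big_ord0 !polyC0 mul0r.
Qed.

Lemma ore_mul1l f : omul 1 f = f.
Proof. by rewrite -polyC1 -polyC1 ore_mul_constl !polyC1 mul1r. Qed.

Lemma ore_mul1r f : omul f 1 = f.
Proof.
rewrite /ore_mul -[in RHS](coefK f) poly_def; apply: eq_bigr => i _.
by rewrite iter_mulx1 mul_polyC.
Qed.

Lemma ore_mulx_mul g h : xmul (omul g h) = omul (xmul g) h.
Proof.
rewrite {1}/ore_mul ore_mulx_sum ore_mulxE ore_mulDl.
have le_delta : (size (map_poly delta g) <= size g)%N by rewrite size_poly.
have le_sigma : (size (map_poly sigma g * 'X)%R <= (size g).+1)%N.
  by rewrite (leq_trans (size_polyMleq _ _)) // size_polyX addn2 ltnS size_poly.
rewrite (ore_mul_widen h le_delta) (ore_mul_widen h le_sigma) big_ord_recl /=.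
rewrite coefMX /= polyC0 mul0r add0r -big_split /=; apply: eq_bigr => i _.
by rewrite ore_mulx_polyC coefMX /= !coef_map_id0 ?sigma0 ?delta0.
Qed.

Lemma ore_mulA f g h : omul f (omul g h) = omul (omul f g) h.
Proof.
have iter_mul i : iter i xmul (omul g h) = omul (iter i xmul g) h.
  by elim: i => //= i ->; rewrite ore_mulx_mul.
rewrite {2}/ore_mul ore_mul_suml /ore_mul; apply: eq_bigr => i _.
by rewrite iter_mul -ore_mul_polyCl.
Qed.

Hypothesis Hdeg : (2 < size (sigma 'X))%N.

Definition sigma_deg := (size (sigma 'X)).-1.

Lemma sigma_deg_gt1 : (1 < sigma_deg)%N.
Proof. by rewrite /sigma_deg; case: (size _) Hdeg => [|[|[|k]]]. Qed.

Lemma sigma_comp r : sigma r = r \Po sigma 'X.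
Proof.
have sigmaX a i : sigma (a ^+ i) = sigma a ^+ i.
  by elim: i => [|i IH]; rewrite ?expr0 ?sigma1 // !exprS sigmaM IH.
rewrite comp_polyE -{1}[r]coefK poly_def (big_morph sigma sigmaD sigma0).
by apply: eq_bigr => i _; rewrite sigmaZ sigmaX.
Qed.

Lemma deg_sigma r : (size (sigma r)).-1 = ((size r).-1 * sigma_deg)%N.
Proof. by rewrite sigma_comp size_comp_poly. Qed.

Lemma sigma_eq0 r : (sigma r == 0) = (r == 0).
Proof.
have [/size1_polyC->|r_gt1] := leqP (size r) 1; first by rewrite sigmaC.
have r_neq0 : r != 0 by rewrite -size_poly_gt0 ltnW.
rewrite (negPf r_neq0) -size_poly_eq0; apply/eqP => sr0.
have := deg_sigma r; rewrite sr0 => /esym/eqP; rewrite muln_eq0.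
by case/orP => /eqP h; have := sigma_deg_gt1; lia.
Qed.

Lemma iter_sigma_eq0 i r : (iter i sigma r == 0) = (r == 0).
Proof. by elim: i => //= i IH; rewrite sigma_eq0 IH. Qed.

Lemma deg_iter_sigma i r : (size (iter i sigma r)).-1 = ((size r).-1 * sigma_deg ^ i)%N.
Proof.
elim: i => [|i IH]; first by rewrite expn0 muln1.
by rewrite /= deg_sigma IH expnS -mulnA (mulnC (sigma_deg ^ i)%N).
Qed.

Lemma size_ore_mulx g : g != 0 ->
  size (xmul g) = (size g).+1 /\ lead_coef (xmul g) = sigma (lead_coef g).
Proof.
move=> g_neq0; have lg_neq0 : sigma (lead_coef g) != 0 by rewrite sigma_eq0 lead_coef_eq0.
have size_sg : size (map_poly sigma g) = size g by rewrite size_map_poly_id0.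
have sg_neq0 : map_poly sigma g != 0 by rewrite -size_poly_eq0 size_sg size_poly_eq0.
have lt_dg : (size (map_poly delta g) < size (map_poly sigma g * 'X)%R)%N.
  by rewrite size_mulX // size_sg ltnS size_poly.
rewrite ore_mulxE size_polyDl // lead_coefDl // size_mulX // size_sg lead_coefMX.
by rewrite lead_coef_map_id0 ?sigma0.
Qed.

Lemma size_iter_mulx i g : g != 0 ->
  size (iter i xmul g) = (size g + i)%N /\
  lead_coef (iter i xmul g) = iter i sigma (lead_coef g).
Proof.
move=> g_neq0; elim: i => [|i [size_i lead_i]] /=; first by rewrite addn0.
have gi_neq0 : iter i xmul g != 0 by rewrite -size_poly_eq0 size_i addn_eq0 size_poly_eq0 (negPf g_neq0).
by have [-> ->] := size_ore_mulx gi_neq0; rewrite size_i lead_i addnS.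
Qed.

Lemma size_ore_mul f g : f != 0 -> g != 0 ->
  size (omul f g) = (size g + (size f).-1)%N /\
  lead_coef (omul f g) = lead_coef f * iter (size f).-1 sigma (lead_coef g).
Proof.
move=> f_neq0 g_neq0; rewrite /ore_mul (polySpred f_neq0) big_ord_recr /= -/(lead_coef f).
set m := (size f).-1; have [size_m lead_m] := size_iter_mulx m g_neq0.
have size_top : size ((lead_coef f)%:P * iter m xmul g) = (size g + m)%N.
  by rewrite size_Cmul ?lead_coef_eq0.
have size_low : (size (\sum_(i < m) (f`_i)%:P * iter i xmul g)%R < size g + m)%N.
  have g_gt0 : (0 < size g)%N by rewrite size_poly_gt0.
  apply: (leq_ltn_trans (size_sum _ _ _)); apply: (@leq_ltn_trans (size g + m).-1); last by lia.
  apply/bigmax_leqP => i _; rewrite mul_polyC (leq_trans (size_scale_leq _ _)) //.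
  by have [-> _] := size_iter_mulx i g_neq0; have := ltn_ord i; lia.
rewrite addrC size_polyDl size_top // lead_coefDl ?size_top //.
by rewrite lead_coefM lead_coefC lead_m.
Qed.

Variable n : nat.
Hypothesis Hn : (0 < n)%N.
Local Notation P := (omul ('X^n)%:P 'X^n).
Local Notation Ppow := (ore_pow sigma delta P).

Lemma size_P : size P = n.+1 /\ lead_coef P = 'X^n.
Proof.
have Xn_neq0 : ('X^n : {poly K}) != 0 by rewrite monic_neq0 ?monicXn.
have CXn_neq0 : ('X^n : {poly K})%:P != 0 by rewrite polyC_eq0.
have [-> ->] := size_ore_mul CXn_neq0 (monic_neq0 (monicXn _ n)).
by rewrite size_polyC Xn_neq0 size_polyXn lead_coefC lead_coefXn addn0 mulr1.
Qed.

Lemma P_neq0 : P != 0.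
Proof. by rewrite -size_poly_eq0 (proj1 size_P). Qed.

Lemma size_Ppow q : size (Ppow q) = (q * n).+1.
Proof.
elim: q => [|q IH]; first by rewrite /ore_pow /= size_poly1.
have Pq_neq0 : Ppow q != 0 by rewrite -size_poly_eq0 IH.
have [-> _] := size_ore_mul P_neq0 Pq_neq0.
by rewrite IH (proj1 size_P) mulSn; lia.
Qed.

Lemma Ppow_neq0 q : Ppow q != 0.
Proof. by rewrite -size_poly_eq0 size_Ppow. Qed.

Lemma Ppow_comm q : omul (Ppow q) P = omul P (Ppow q).
Proof.
elim: q => [|q IH]; first by rewrite /ore_pow /= ore_mul1l ore_mul1r.
by rewrite [Ppow q.+1]/ore_pow /= -/(Ppow q) -ore_mulA IH.
Qed.

(* Comparing leading coefficients of f P and P f: with m = deg_x f and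
   k = deg_y (lc f), the identity  lc f * sigma^m(y^n) = y^n * sigma^n(lc f)
   yields  k + n d^m = n + k d^n. *)
Lemma lead_degree_equation f : f != 0 -> centralizer sigma delta P f ->
  ((size (lead_coef f)).-1 + n * sigma_deg ^ (size f).-1 =
   n + (size (lead_coef f)).-1 * sigma_deg ^ n)%N.
Proof.
move=> f_neq0 Cf; have [_ lead_fP] := size_ore_mul f_neq0 P_neq0.
have [_ lead_Pf] := size_ore_mul P_neq0 f_neq0.
have Xn_neq0 : ('X^n : {poly K}) != 0 by rewrite monic_neq0 ?monicXn.
have := congr1 (fun p : {poly K} => (size p).-1) (congr1 lead_coef Cf).
rewrite /= lead_fP lead_Pf (proj2 size_P) (proj1 size_P) /=.
by rewrite !deg_mul ?iter_sigma_eq0 ?lead_coef_eq0 // !deg_iter_sigma size_polyXn.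
Qed.

Lemma centralizer_size f : f != 0 -> centralizer sigma delta P f ->
  exists q, size f = size (Ppow q).
Proof.
move=> f_neq0 Cf; have /dvdnP [q def_m] := degree_equation_dvd sigma_deg_gt1 Hn
  (lead_degree_equation f_neq0 Cf).
by exists q; rewrite size_Ppow -def_m prednK // size_poly_gt0.
Qed.

Lemma centralizer_lead_size f g : f != 0 -> g != 0 ->
  centralizer sigma delta P f -> centralizer sigma delta P g -> size f = size g ->
  size (lead_coef f) = size (lead_coef g).
Proof.
move=> f_neq0 g_neq0 Cf Cg eq_fg.
have dn_gt1 : (1 < sigma_deg ^ n)%N.
  by rewrite (leq_trans sigma_deg_gt1) // -{1}(expn1 sigma_deg) leq_pexp2l // ltnW // sigma_deg_gt1.
have Eg := lead_degree_equation g_neq0 Cg; rewrite -eq_fg in Eg.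
have := degree_equation_unique dn_gt1 (lead_degree_equation f_neq0 Cf) Eg.
by rewrite -!subn1 => /eqP; rewrite eqn_sub2rE ?size_poly_gt0 ?lead_coef_eq0 // => /eqP.
Qed.

Lemma centralizer_add_pow f q (c : K) : centralizer sigma delta P f ->
  centralizer sigma delta P (f + c%:P%:P * Ppow q).
Proof.
rewrite /centralizer ore_mulDl ore_mulDr => ->; congr (_ + _).
by rewrite ore_mul_polyCl ore_mul_constr Ppow_comm.
Qed.

Lemma centralizer_reduce f : f != 0 -> centralizer sigma delta P f ->
  exists q (c : K), (size (f + c%:P%:P * Ppow q)%R < size f)%N.
Proof.
move=> f_neq0 Cf; have [q eq_size] := centralizer_size f_neq0 Cf.
have eq_lead := centralizer_lead_size f_neq0 (Ppow_neq0 q) Cf (Ppow_comm q) eq_size.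
have [le_h lt_lead] := cancel_lead eq_size eq_lead (Ppow_neq0 q).
set c := _ / _ in le_h lt_lead; exists q, (- c).
rewrite !polyCN mulNr ltn_neqAle le_h andbT; apply/eqP => eq_hf.
have h_neq0 : f - c%:P%:P * Ppow q != 0 by rewrite -size_poly_eq0 eq_hf size_poly_eq0.
have Ch : centralizer sigma delta P (f - c%:P%:P * Ppow q).
  by rewrite -mulNr -!polyCN; apply: centralizer_add_pow.
have := lt_lead eq_hf; rewrite (centralizer_lead_size h_neq0 f_neq0 Ch Cf eq_hf).
by rewrite ltnn.
Qed.

Lemma Kpoly_in_add f q (c : K) : Kpoly_in sigma delta P f ->
  Kpoly_in sigma delta P (f + c%:P%:P * Ppow q).
Proof.
case=> a ->; set N := maxn (size a) q.+1.
exists (mkseq (fun i => a`_i + (if i == q then c else 0)) N); rewrite size_mkseq.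
rewrite (big_ord_widen N (fun i => omul (a`_i)%:P%:P (Ppow i)) (leq_maxl _ _)).
rewrite big_mkcond /=.
have -> : c%:P%:P * Ppow q = \sum_(i < N | (i : nat) == q) c%:P%:P * Ppow i.
  by rewrite (big_ord1_eq _ (fun i => c%:P%:P * Ppow i)) leq_maxr.
rewrite [X in _ + X]big_mkcond -big_split /=; apply: eq_bigr => i _.
rewrite nth_mkseq // !ore_mul_constl !polyCD mulrDl.
congr (_ + _); first by case: ltnP => // le_ai; rewrite nth_default // !polyC0 mul0r.
by case: eqP => [->|_]; rewrite ?polyC0 ?mul0r.
Qed.

Lemma centralizer_Kpoly_in f : centralizer sigma delta P f -> Kpoly_in sigma delta P f.
Proof.
have [s] := ubnP (size f); elim: s f => // s IH f lt_fs Cf.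
have [-> | f_neq0] := eqVneq f 0; first by exists [::]; rewrite big_ord0.
have [q [c lt_size]] := centralizer_reduce f_neq0 Cf.
have -> : f = (f + c%:P%:P * Ppow q) + (- c)%:P%:P * Ppow q.
  by rewrite !polyCN mulNr addrK.
apply: Kpoly_in_add; apply: IH (centralizer_add_pow q c Cf).
exact: leq_trans lt_size _.
Qed.

Lemma Kpoly_in_centralizer f : Kpoly_in sigma delta P f -> centralizer sigma delta P f.
Proof.
case=> a ->; rewrite /centralizer ore_mul_suml ore_mul_sumr; apply: eq_bigr => i _.
by rewrite !ore_mul_constl ore_mul_polyCl ore_mul_constr Ppow_comm.
Qed.

End OreExtension.

Theorem corollary5p7 (K : fieldType) (sigma delta : {poly K} -> {poly K})
  (Hsigma : is_Kalg_endo sigma)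
  (Hdeg : (2 < size (sigma 'X))%N)
  (Hdelta : is_Klin_sigma_deriv sigma delta)
  (n : nat) (Hn : (0 < n)%N) :
  let P := ore_mul sigma delta (('X^n)%:P) 'X^n in
  forall f : {poly {poly K}},
    centralizer sigma delta P f <-> Kpoly_in sigma delta P f.
Proof.
move=> P f; split.
- exact: centralizer_Kpoly_in Hsigma Hdelta Hdeg n Hn f.
- exact: Kpoly_in_centralizer Hsigma Hdelta n f.
Qed.
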